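(* Let $n\in\mathbb{N}$ and let $a=3$ or $a>5$ (real). Let $E_n(a,1)$ be the $(n+1)\times n$ matrix whose $(i,j)$ entry is $-a$ if $i=j$, $1$ if $j=i+1$, $a$ if $i=j+1$, $-1$ if $i=j+2$, and $0$ otherwise, and let $B_n(a,1)$ be the $(n+3)\times n$ matrix whose first row is $(1,0,\dots,0)$, whose rows $2,\dots,n+2$ are the rows of $E_n(a,1)$ in order, and whose last row is $(0,\dots,0,-1)$. For $1\le i<j<k\le n+3$, let $B_n(a,1)^{i,j,k}$ be the $n\times n$ matrix obtained by deleting the $i$-th, $j$-th and $k$-th rows of $B_n(a,1)$. Then $|B_n(a,1)^{i,j,k}|\neq0$.
   Context: $|M|$ denotes the determinant of a square matrix $M$. *)

From HB Require Import structures.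
From mathcomp Require Import all_boot all_order all_algebra.
From mathcomp Require Import reals.
Set Implicit Arguments. Unset Strict Implicit. Unset Printing Implicit Defensive.
Import Order.TTheory GRing.Theory Num.Theory.
Local Open Scope ring_scope.

(* Entry (r, c) of E_n(a,1), 0-based indices (r < n+1, c < n). *)
Definition Eentry (R : ringType) (a : R) (r c : nat) : R :=
  if r == c then - a
  else if c == r.+1 then 1
  else if r == c.+1 then a
  else if r == c.+2 then -1
  else 0.

Definition Bmat (R : ringType) (n : nat) (a : R) : 'M[R]_(n.+3, n) :=
  \matrix_(r < n.+3, c < n)
    if (r : nat) == 0%N then (if (c : nat) == 0%N then 1 else 0)
    else if (r : nat) == n.+2 then (if (c : nat) == n.-1 then -1 else 0)
    else Eentry a (r.-1) c.

(* For 0-based i < j < k < n+3, the t-th (0-based) row kept after deleting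
   rows i, j, k: skip i, then j, then k. *)
Definition del3 (n : nat) (i j k : nat) (t : 'I_n) : 'I_n.+3 :=
  inord (bump k (bump j (bump i t))).

Definition Bdel (R : ringType) (n : nat) (a : R) (i j k : nat) : 'M[R]_n :=
  rowsub (del3 i j k) (Bmat n a).

From HB Require Import structures.
From mathcomp Require Import all_boot all_order all_algebra.
From mathcomp Require Import reals zify ring lra.
Import Order.TTheory GRing.Theory Num.Theory.
Local Open Scope ring_scope.
Set Implicit Arguments. Unset Strict Implicit. Unset Printing Implicit Defensive.

(* Column c of B_n(a,1) holds the coefficients of x^c p(x), where
   p(x) = 1 - a x + a x^2 - x^3 = (1 - x)(1 - (a - 1) x + x^2).  Hence every
   sequence f with f c - a f(c+1) + a f(c+2) - f(c+3) = 0 is a left null vector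
   of B, e.g. f r = rho^r for a root rho of p.  If the minor obtained by deleting
   rows i < j < k were singular, B v would vanish outside {i, j, k} for some
   v <> 0, so (B v)_i, (B v)_j, (B v)_k would be orthogonal to the restrictions
   of all such f to {i, j, k}.  For a = 3 these restrictions include r^0, r^1,
   r^2; for a > 3 (a > 5 is more than needed) they include q^-r (q^r)^p for
   p = 0, 1, 2, where q > 1 and 1/q are the roots of 1 - (a - 1) x + x^2.  Both
   are 3x3 Vandermonde systems with distinct nodes, so B v = 0, and B has full
   column rank because its top n x n block is unitriangular. *)

Definition band (R : pzRingType) (s : seq R) (r c : nat) : R :=
  if (c <= r)%N then s`_(r - c) else 0.

Lemma sum_band_mul (R : pzRingType) (s : seq R) N (f : nat -> R) c :
  (c + size s <= N)%N ->
  \sum_(r < N) f r * band s r c = \sum_(d < size s) f (c + d)%N * s`_d.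
Proof.
move=> cN; rewrite -(big_mkord xpredT (fun r => f r * band s r c)).
rewrite (big_cat_nat (n := c)) //=; last by lia.
rewrite big1_seq ?add0r => [|r]; last first.
  by rewrite mem_index_iota => /andP[_ /andP[_ rc]]; rewrite /band leqNgt rc mulr0.
rewrite -{1}[c]add0n big_addn (big_cat_nat (n := size s)) //=; last by lia.
rewrite [X in _ + X]big1_seq ?addr0 => [|d]; last first.
  rewrite mem_index_iota => /andP[_ /andP[sd _]].
  by rewrite /band leq_addl addnK nth_default ?mulr0.
rewrite big_mkord; apply: eq_bigr => d _.
by rewrite /band leq_addl addnK addnC.
Qed.

Definition Bseq (R : pzRingType) (a : R) : seq R := [:: 1; -a; a; -1].

Lemma Bmat_band (R : nzRingType) n (a : R) (r : 'I_n.+3) (c : 'I_n) :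
  Bmat n a r c = band (Bseq a) r c.
Proof.
rewrite /Bmat mxE /Eentry /band; case: r c => [r rn] [c cn] /=.
case: leqP => [cr|rc]; last by do ![case: eqP => ? //]; lia.
rewrite -(subnKC cr) addKn; case: (r - c)%N => [|[|[|[|d]]]] /=.
all: by do ![case: eqP => ? //]; rewrite ?nth_nil //; lia.
Qed.

Definition Brec (R : pzRingType) (a : R) (f : nat -> R) : Prop :=
  forall c, f c - f c.+1 * a + f c.+2 * a - f c.+3 = 0.

Lemma Brec_mulmx (R : nzRingType) n (a : R) (f : nat -> R) :
  Brec a f -> \row_(r < n.+3) f r *m Bmat n a = 0.
Proof.
move=> fa; apply/rowP => c; rewrite !mxE.
under eq_bigr do rewrite Bmat_band mxE.
rewrite sum_band_mul /=; last by have := ltn_ord c; lia.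
rewrite !big_ord_recr big_ord0 /= add0r addn0 addn1 addn2 addn3.
by rewrite !mulrN !mulr1 -(fa c).
Qed.

Lemma Brec_geom (R : comPzRingType) (a x : R) :
  (1 - x) * (x ^+ 2 - (a - 1) * x + 1) = 0 -> Brec a (fun r => x ^+ r).
Proof.
by move=> hx c; rewrite -(mulr0 (x ^+ c)) -hx !exprS; ring.
Qed.

Lemma Brec3_powr (R : comPzRingType) p :
  (p <= 2)%N -> Brec 3 (fun r => r%:R ^+ p : R).
Proof. by case: p => [|[|[|//]]] _ c; rewrite !mulrS; ring. Qed.

Lemma vandermonde3_fst (R : idomainType) (x y z I J K : R) :
  I != J -> I != K ->
  (forall p, (p <= 2)%N -> I ^+ p * x + J ^+ p * y + K ^+ p * z = 0) ->
  x = 0.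
Proof.
move=> IJ IK h.
have : x * ((I - J) * (I - K)) = 0.
  transitivity ((I ^+ 2 * x + J ^+ 2 * y + K ^+ 2 * z)
    - (J + K) * (I ^+ 1 * x + J ^+ 1 * y + K ^+ 1 * z)
    + J * K * (I ^+ 0 * x + J ^+ 0 * y + K ^+ 0 * z)); first ring.
  by rewrite !h //; ring.
by move/eqP; rewrite !mulf_eq0 !subr_eq0 (negbTE IJ) (negbTE IK) !orbF => /eqP.
Qed.

Lemma vandermonde3 (R : idomainType) (x y z I J K : R) :
  I != J -> I != K -> J != K ->
  (forall p, (p <= 2)%N -> I ^+ p * x + J ^+ p * y + K ^+ p * z = 0) ->
  [/\ x = 0, y = 0 & z = 0].
Proof.
move=> IJ IK JK h; split.
- exact: vandermonde3_fst IJ IK h.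
- apply: (@vandermonde3_fst _ y x z J I K); rewrite 1?[J == I]eq_sym // => p /h.
  by rewrite (addrC (_ * x)).
- apply: (@vandermonde3_fst _ z x y K I J); rewrite 1?[K == _]eq_sym // => p /h.
  by rewrite addrC addrA.
Qed.

Lemma Bmat_mulmx_eq0 (R : comUnitRingType) n (a : R) (v : 'cV_n) :
  Bmat n a *m v = 0 -> v = 0.
Proof.
move=> Bv0.
pose T : 'M_n := rowsub (widen_ord (leq_addl 3 n)) (Bmat n a).
have detT : \det T = 1.
  rewrite det_trig; last first.
    by apply/is_trig_mxP => i j ij; rewrite mxE Bmat_band /band leqNgt ij.
  by apply: big1 => i _; rewrite mxE Bmat_band /band leqnn subnn.
have Tunit : T \in unitmx by rewrite unitmxE detT unitr1.
by rewrite -(mulKmx Tunit v) mul_rowsub_mx rowsubE Bv0 !mulmx0.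
Qed.

Lemma del3_onto n (i j k r : 'I_n.+3) : (i < j)%N -> (j < k)%N ->
  r != i -> r != j -> r != k -> exists t : 'I_n, del3 i j k t = r.
Proof.
move=> ij jk; rewrite -!val_eqE /= => ri rj rk.
have [rn kn] := (ltn_ord r, ltn_ord k).
have tn : (unbump i (unbump j (unbump k r)) < n)%N by rewrite /unbump; lia.
exists (Ordinal tn); apply/val_inj; rewrite /del3 /= inordK; rewrite /bump /unbump; lia.
Qed.

Lemma mulmx_del3_eq0 (R : pzRingType) n m (M : 'M[R]_(n.+3, m)) (v : 'cV_m)
    (i j k : 'I_n.+3) : (i < j)%N -> (j < k)%N ->
  rowsub (del3 i j k) M *m v = 0 ->
  forall r, r != i -> r != j -> r != k -> (M *m v) r 0 = 0.
Proof.
move=> ij jk Mv0 r ri rj rk; have [t <-] := del3_onto ij jk ri rj rk.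
by move: Mv0; rewrite mul_rowsub_mx => /matrixP/(_ t 0); rewrite !mxE.
Qed.

Lemma sum_support3 (V : nmodType) N (F : 'I_N -> V) (i j k : 'I_N) :
  i != j -> i != k -> j != k ->
  (forall r, r != i -> r != j -> r != k -> F r = 0) ->
  \sum_r F r = F i + F j + F k.
Proof.
move=> ij ik jk F0; rewrite (bigD1 i) //= (bigD1 j) 1?eq_sym //= (bigD1 k) /=; last first.
  by rewrite eq_sym ik eq_sym jk.
by rewrite big1 ?addr0 ?addrA // => r /andP[/andP[ri rj] rk]; apply: F0.
Qed.

Lemma Brec_sum_mulmx (R : nzRingType) n (a : R) (f : nat -> R) (v : 'cV_n) :
  Brec a f -> \sum_(r < n.+3) f r * (Bmat n a *m v) r 0 = 0.
Proof.
move=> /(Brec_mulmx n)/(congr1 (mulmx^~ v)); rewrite -mulmxA mul0mx.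
by move=> /matrixP/(_ 0 0); rewrite !mxE; under eq_bigr do rewrite mxE.
Qed.

Lemma Brec3_separates (R : numDomainType) (i j k : nat) (x y z : R) :
  i != j -> i != k -> j != k ->
  (forall f, Brec 3 f -> f i * x + f j * y + f k * z = 0) ->
  [/\ x = 0, y = 0 & z = 0].
Proof.
move=> ij ik jk hf; apply: (@vandermonde3 _ _ _ _ i%:R j%:R k%:R).
all: by rewrite ?eqr_nat // => p /Brec3_powr/hf.
Qed.

Lemma Bchar_root_gt1 (R : rcfType) (a : R) :
  3 < a -> exists2 q : R, 1 < q & q ^+ 2 - (a - 1) * q + 1 = 0.
Proof.
move=> a3; pose s := Num.sqrt ((a - 1) ^+ 2 - 4).
have s0 : 0 <= s by apply: sqrtr_ge0.
have s2 : s ^+ 2 = (a - 1) ^+ 2 - 4 by apply: sqr_sqrtr; nra.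
exists ((a - 1 + s) / 2); first by rewrite ltr_pdivlMr //; lra.
have -> : ((a - 1 + s) / 2) ^+ 2 - (a - 1) * ((a - 1 + s) / 2) + 1
        = (s ^+ 2 - ((a - 1) ^+ 2 - 4)) / 4 by field.
by rewrite s2 subrr mul0r.
Qed.

Lemma Brec_separates (R : rcfType) (a : R) (i j k : nat) (x y z : R) :
  3 < a -> i != j -> i != k -> j != k ->
  (forall f, Brec a f -> f i * x + f j * y + f k * z = 0) ->
  [/\ x = 0, y = 0 & z = 0].
Proof.
move=> a3 ij ik jk hf; have [q q1 q_root] := Bchar_root_gt1 a3.
have q0 : q != 0 by rewrite gt_eqF // (lt_trans ltr01).
have qVn0 r : q^-1 ^+ r != 0 by rewrite expf_neq0 ?invr_eq0.
have q_inj : injective (GRing.exp q) by apply: ieexprIn; rewrite ?gt_eqF; lra.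
(* The ratios q^-1, 1, q are the three roots of p. *)
have ratio_root p : (p <= 2)%N ->
    let t := q^-1 * q ^+ p in (1 - t) * (t ^+ 2 - (a - 1) * t + 1) = 0.
  case: p => [|[|[|//]]] _ /=.
  - rewrite mulr1 -[RHS](mulr0 (q^-1 ^+ 2 * (1 - q^-1))) -q_root; field.
    by rewrite q0.
  - by rewrite expr1 mulVf // subrr mul0r.
  - by rewrite expr2 mulKf // q_root mulr0.
have [] := @vandermonde3 _ (q^-1 ^+ i * x) (q^-1 ^+ j * y) (q^-1 ^+ k * z)
  (q ^+ i) (q ^+ j) (q ^+ k).
- by rewrite (inj_eq q_inj).
- by rewrite (inj_eq q_inj).
- by rewrite (inj_eq q_inj).
- move=> p /ratio_root/Brec_geom/hf <-.
  by rewrite !exprMn -!exprM !(mulnC p); ring.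
move=> /eqP + /eqP + /eqP; rewrite !mulf_eq0 !(negbTE (qVn0 _)) /=.
by move=> /eqP-> /eqP-> /eqP->.
Qed.

Unset Implicit Arguments.

Theorem proposition5p1 (R : realType) (n : nat) (a : R) :
  (a = 3 \/ 5 < a) ->
  forall i j k : 'I_n.+3, (i < j)%N -> (j < k)%N ->
  \det (Bdel n a i j k) != 0.
Proof.
move=> ha i j k ij jk; apply/negP; rewrite -det_tr => /det0P[v v_neq0].
move=> /(congr1 trmx); rewrite trmx_mul trmxK trmx0 => Bdel_v.
set u := Bmat n a *m v^T.
have u_off := mulmx_del3_eq0 ij jk Bdel_v.
have [ij' ik' jk'] : [/\ i != j, i != k & j != k].
  by rewrite !neq_ltn ij jk (ltn_trans ij jk).
have u_ijk f : Brec a f -> f i * u i 0 + f j * u j 0 + f k * u k 0 = 0.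
  move=> /(Brec_sum_mulmx v^T).
  by rewrite (sum_support3 ij' ik' jk') // => r ri rj rk; rewrite u_off ?mulr0.
have [ui uj uk] : [/\ u i 0 = 0, u j 0 = 0 & u k 0 = 0].
  case: ha => [a3|a5]; last by apply: (Brec_separates _ ij' ik' jk' u_ijk); lra.
  by rewrite a3 in u_ijk; apply: (Brec3_separates ij' ik' jk' u_ijk).
have u0 : u = 0.
  apply/matrixP => r c; rewrite ord1 [RHS]mxE.
  have [->|ri] := eqVneq r i => //; have [->|rj] := eqVneq r j => //.
  by have [->|rk] := eqVneq r k => //; apply: u_off.
by move: v_neq0; rewrite -trmx_eq0 (Bmat_mulmx_eq0 u0) eqxx.
Qed.
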